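(* Let $(L,\le,\bot,\top)$ be a complete lattice and $(\&_i,\swarrow^i,\nwarrow_i)$, $i=1,\dots,n$, adjoint triples on $L$ with $x\,\&_i\,\top=\top\,\&_i\,x=x$ for all $x\in L$ and all $i$. Let $(A,B,R,\sigma)$ be a normalized context whose concept lattice $\mathcal{M}$ satisfies the ascending chain condition. Then the following are equivalent: (i) $(A,B,R,\sigma)$ has a decomposition into independent subcontexts; (ii) $\mathcal{M}$ has a decomposition into independent blocks.
   Context: An adjoint triple on $L$ is a triple of maps $\&,\swarrow,\nwarrow\colon L\times L\to L$ with $x\le z\swarrow y\iff x\& y\le z\iff y\le z\nwarrow x$. A context is $(A,B,R,\sigma)$ with $A,B$ non-empty, $R\colon A\times B\to L$, $\sigma\colon A\times B\to\{1,\dots,n\}$; normalized means every $a\in A$ has $b_1,b_2$ with $R(a,b_1)\ne\bot$, $R(a,b_2)=\bot$, and every $b\in B$ has $a_1,a_2$ with $R(a_1,b)\ne\bot$, $R(a_2,b)=\bot$. For $g\colon B\to L$, $f\colon A\to L$: $g^\uparrow(a)=\inf_{b}R(a,b)\swarrow^{\sigma(a,b)}g(b)$, $f^\downarrow(b)=\inf_{a}R(a,b)\nwarrow_{\sigma(a,b)}f(a)$. $\mathcal{M}$ is the complete lattice of pairs $\langle g,f\rangle$ with $g^\uparrow=f$, $f^\downarrow=g$, ordered by $g_1\le g_2$ pointwise. For a bounded lattice $(M,\preceq,\bot,\top)$, a block is a sublattice $K\subsetneq M$ with $K\setminus\{\bot,\top\}\ne\varnothing$ and $(\{x\mid k\preceq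 x\}\cup\{x\mid x\preceq k\})\setminus\{\bot,\top\}\subseteq K$ for all $k\in K\setminus\{\bot,\top\}$; blocks $K_1,K_2$ are independent if $K_1\cap K_2\subseteq\{\bot,\top\}$; a decomposition into independent blocks is a family of pairwise independent blocks whose union is $M$. A separable subcontext is a tuple $(Y,X,R_{Y\times X},\sigma_{Y\times X})$ (restrictions of $R,\sigma$) with $Y\subsetneq A$, $X\subsetneq B$ non-empty, $R(a,b)\neq\bot$ for some $a\in Y,b\in X$, $R=\bot$ on $Y\times(B\setminus X)$ and on $(A\setminus Y)\times X$. $\&$ has zero-divisors if $x\&y=\bot$ for some $x,y\neq\bot$. A decomposition into independent subcontexts is a family $\{(A_\lambda,B_\lambda,R_\lambda,\sigma_\lambda)\}_{\lambda\in\Lambda}$, $\Lambda\ne\varnothing$, $R_\lambda,\sigma_\lambda$ restrictions to $A_\lambda\times B_\lambda$, such that each tuple is a separable subcontext, the $A_\lambda$ are pairwise disjoint with union $A$, the $B_\lambda$ are pairwise disjoint with union $B$, and for each $\lambda$ the conjunctor $\&_{\sigma(a,b)}$ has no zero-divisors for all $(a,b)\in((A\setminus A_\lambda)\times B_\lambda)\cup(A_\lambda\times(B\setminus B_\lambda))$. *)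

From mathcomp Require Import ssreflect ssrbool ssrnat fintype.

Set Implicit Arguments.
Unset Strict Implicit.

Record CLattice := {
  cl_car :> Type;
  cl_le : cl_car -> cl_car -> Prop;
  cl_refl : forall x, cl_le x x;
  cl_trans : forall x y z, cl_le x y -> cl_le y z -> cl_le x z;
  cl_antisym : forall x y, cl_le x y -> cl_le y x -> x = y;
  cl_inf : (cl_car -> Prop) -> cl_car;
  cl_inf_lb : forall (S : cl_car -> Prop) x, S x -> cl_le (cl_inf S) x;
  cl_inf_glb : forall (S : cl_car -> Prop) y,
      (forall x, S x -> cl_le y x) -> cl_le y (cl_inf S)
}.

Definition cl_bot (L : CLattice) : L := @cl_inf L (fun _ => True).
Definition cl_top (L : CLattice) : L := @cl_inf L (fun _ => False).

Definition adjoint_triple (L : CLattice) (conj sw nw : L -> L -> L) : Prop :=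
  forall x y z : L,
    (@cl_le L x (sw z y) <-> @cl_le L (conj x y) z) /\
    (@cl_le L (conj x y) z <-> @cl_le L y (nw z x)).

Definition has_zero_divisors (L : CLattice) (conj : L -> L -> L) : Prop :=
  exists x y : L, x <> cl_bot L /\ y <> cl_bot L /\ conj x y = cl_bot L.

Section Context.
Variables (L : CLattice) (n : nat) (conj sw nw : 'I_n -> L -> L -> L).
Variables (A B : Type) (R : A -> B -> L) (sigma : A -> B -> 'I_n).

Definition normalized : Prop :=
  (forall a, (exists b1, R a b1 <> cl_bot L) /\ (exists b2, R a b2 = cl_bot L)) /\
  (forall b, (exists a1, R a1 b <> cl_bot L) /\ (exists a2, R a2 b = cl_bot L)).

Definition up (g : B -> L) : A -> L :=
  fun a => @cl_inf L (fun z => exists b, z = sw (sigma a b) (R a b) (g b)).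

Definition down (f : A -> L) : B -> L :=
  fun b => @cl_inf L (fun z => exists a, z = nw (sigma a b) (R a b) (f a)).

Definition concept (p : (B -> L) * (A -> L)) : Prop :=
  up (fst p) = snd p /\ down (snd p) = fst p.

Definition concept_le (p q : (B -> L) * (A -> L)) : Prop :=
  forall b, @cl_le L (fst p b) (fst q b).

Definition separable (Y : A -> Prop) (X : B -> Prop) : Prop :=
  (exists a, Y a) /\ (exists a, ~ Y a) /\
  (exists b, X b) /\ (exists b, ~ X b) /\
  (exists a b, Y a /\ X b /\ R a b <> cl_bot L) /\
  (forall a b, Y a -> ~ X b -> R a b = cl_bot L) /\
  (forall a b, ~ Y a -> X b -> R a b = cl_bot L).

Definition has_independent_subcontext_decomposition : Prop :=
  exists (Lam : Type) (AA : Lam -> A -> Prop) (BB : Lam -> B -> Prop),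
    inhabited Lam /\
    (forall l, separable (AA l) (BB l)) /\
    (forall l m a, l <> m -> AA l a -> AA m a -> False) /\
    (forall a, exists l, AA l a) /\
    (forall l m b, l <> m -> BB l b -> BB m b -> False) /\
    (forall b, exists l, BB l b) /\
    (forall l a b,
        ((~ AA l a /\ BB l b) \/ (AA l a /\ ~ BB l b)) ->
        ~ has_zero_divisors (conj (sigma a b))).
End Context.

Section Blocks.
Variables (T : Type) (M : T -> Prop) (le : T -> T -> Prop).

Definition is_bottom (x : T) : Prop := M x /\ forall y, M y -> le x y.
Definition is_top (x : T) : Prop := M x /\ forall y, M y -> le y x.
Definition proper_elt (x : T) : Prop := M x /\ ~ is_bottom x /\ ~ is_top x.

Definition is_meet (a b m : T) : Prop :=
  M m /\ le m a /\ le m b /\ forall z, M z -> le z a -> le z b -> le z m.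
Definition is_join (a b m : T) : Prop :=
  M m /\ le a m /\ le b m /\ forall z, M z -> le a z -> le b z -> le m z.

Definition is_block (K : T -> Prop) : Prop :=
  (forall x, K x -> M x) /\
  (exists x, M x /\ ~ K x) /\
  (forall a b m, K a -> K b -> is_meet a b m -> K m) /\
  (forall a b m, K a -> K b -> is_join a b m -> K m) /\
  (exists k, K k /\ proper_elt k) /\
  (forall k x, K k -> proper_elt k -> proper_elt x ->
      (le k x \/ le x k) -> K x).

Definition independent_blocks (K1 K2 : T -> Prop) : Prop :=
  forall x, K1 x -> K2 x -> is_bottom x \/ is_top x.

Definition has_independent_block_decomposition : Prop :=
  exists (J : Type) (K : J -> T -> Prop),
    (forall j, is_block (K j)) /\
    (forall j j', j <> j' -> independent_blocks (K j) (K j')) /\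
    (forall x, M x <-> exists j, K j x).

Definition ACC : Prop :=
  forall c : nat -> T, (forall k, M (c k)) -> (forall k, le (c k) (c (S k))) ->
    exists N, forall m, N <= m -> c m = c N.
End Blocks.

From mathcomp Require Import ssreflect ssrfun ssrbool ssrnat fintype.
From Stdlib Require Import Classical FunctionalExtensionality.

Set Implicit Arguments.
Unset Strict Implicit.

(* Let X(a) and Y(b) be the concepts generated by the indicators of an object a and of an
   attribute b.  By the unit laws X(a) has g-component R(a,-) and Y(b) has f-component
   R(-,b), and normality makes both proper.

   Independent subcontexts (A_l, B_l) yield the blocks K_l = {top} ∪ {<g,f> | g = ⊥ outside
   B_l}.  They cover M because a concept <g,f> other than the top cannot have g nonzero both
   inside and outside some B_l: otherwise every object a, say in A_m, has an attribute b
   outside B_m with g(b) ≠ ⊥ and R(a,b) = ⊥, and f(a) & g(b) ≤ R(a,b) without zero-divisors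
   forces f(a) = ⊥; so f = ⊥ and <g,f> is the top.

   Conversely, a block contains every proper element comparable to one of its proper
   elements.  If R(a,b) ≠ ⊥, the concept generated by the value R(a,b) at b lies below both
   X(a) and Y(b), so these share a block, and grouping objects and attributes by the block
   of X(a), Y(b) gives separable subcontexts.  A zero-divisor x & y = ⊥ at (a,b) across two
   blocks would put the concept generated by y at b, whose f-component at a is at least x,
   into both. *)

Local Notation "x ⊑ y" := (cl_le x y) (at level 70).
Local Notation "⊥" := (cl_bot _).
Local Notation "⊤" := (cl_top _).

Section CompleteLattice.
Variable L : CLattice.
Implicit Types x y : L.

Lemma cl_bot_min x : ⊥ ⊑ x.
Proof. exact: (@cl_inf_lb L (fun _ => True)). Qed.

Lemma cl_top_max x : x ⊑ ⊤.
Proof. by apply: cl_inf_glb. Qed.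

Lemma cl_le_bot x : x ⊑ ⊥ -> x = ⊥.
Proof. by move=> le_x_bot; apply: cl_antisym le_x_bot (cl_bot_min x). Qed.

Lemma cl_top_le x : ⊤ ⊑ x -> x = ⊤.
Proof. exact: cl_antisym (cl_top_max x). Qed.

Lemma cl_bot_neq_top x : x <> ⊥ -> ⊥ <> ⊤ :> L.
Proof.
by move=> x_neq0 bot_top; apply: x_neq0; apply: cl_le_bot; rewrite bot_top; apply: cl_top_max.
Qed.

Lemma cl_le_funext (T : Type) (f g : T -> L) :
  (forall t, f t ⊑ g t) -> (forall t, g t ⊑ f t) -> f = g.
Proof.
by move=> le_fg le_gf; apply: functional_extensionality => t; apply: cl_antisym.
Qed.

(* [v] at [t] and [⊥] elsewhere, written as an infimum to avoid deciding [s = t]. *)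
Definition spike (T : Type) (t : T) (v : L) : T -> L :=
  fun s => cl_inf (fun z => z = v \/ s <> t).

Lemma spike_at T (t : T) v : spike t v t = v.
Proof.
apply: cl_antisym; first by apply: cl_inf_lb; left.
by apply: cl_inf_glb => z [-> | //]; apply: cl_refl.
Qed.

Lemma spike_off T (t s : T) v : s <> t -> spike t v s = ⊥.
Proof. by move=> neq_st; apply: cl_le_bot; apply: cl_inf_lb; right. Qed.

Lemma spike_le T (t : T) v (h : T -> L) : v ⊑ h t -> forall s, spike t v s ⊑ h s.
Proof.
move=> le_v s; case: (classic (s = t)) => [-> | neq_st]; first by rewrite spike_at.
by rewrite spike_off //; apply: cl_bot_min.
Qed.

End CompleteLattice.

Section AdjointTriple.
Variables (L : CLattice) (conj sw nw : L -> L -> L).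
Hypothesis adj : adjoint_triple conj sw nw.
Implicit Types x y z : L.

Lemma adj_sw x y z : x ⊑ sw z y <-> conj x y ⊑ z.
Proof. exact: proj1 (adj x y z). Qed.

Lemma adj_nw x y z : conj x y ⊑ z <-> y ⊑ nw z x.
Proof. exact: proj2 (adj x y z). Qed.

Lemma conj_mono x x' y y' : x ⊑ x' -> y ⊑ y' -> conj x y ⊑ conj x' y'.
Proof.
move=> le_x le_y; apply: (@cl_trans _ _ (conj x' y)).
  by apply/adj_sw; apply: cl_trans le_x _; apply/adj_sw; apply: cl_refl.
by apply/adj_nw; apply: cl_trans le_y _; apply/adj_nw; apply: cl_refl.
Qed.

Lemma conj_bot_l y : conj ⊥ y = ⊥.
Proof. by apply: cl_le_bot; apply/adj_sw; apply: cl_bot_min. Qed.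

Lemma conj_bot_r x : conj x ⊥ = ⊥.
Proof. by apply: cl_le_bot; apply/adj_nw; apply: cl_bot_min. Qed.

Lemma sw_bot z : sw z ⊥ = ⊤.
Proof. by apply: cl_top_le; apply/adj_sw; rewrite conj_bot_r; apply: cl_bot_min. Qed.

Lemma nw_bot z : nw z ⊥ = ⊤.
Proof. by apply: cl_top_le; apply/adj_nw; rewrite conj_bot_l; apply: cl_bot_min. Qed.

Lemma sw_top z : (forall x, conj x ⊤ = x) -> sw z ⊤ = z.
Proof.
move=> conj_top; apply: cl_antisym.
  by rewrite -[sw z ⊤]conj_top; apply/adj_sw; apply: cl_refl.
by apply/adj_sw; rewrite conj_top; apply: cl_refl.
Qed.

Lemma nw_top z : (forall y, conj ⊤ y = y) -> nw z ⊤ = z.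
Proof.
move=> conj_top; apply: cl_antisym.
  by rewrite -[nw z ⊤]conj_top; apply/adj_nw; apply: cl_refl.
by apply/adj_nw; rewrite conj_top; apply: cl_refl.
Qed.

End AdjointTriple.

Section ConceptLattice.
Variables (L : CLattice) (n : nat) (conj sw nw : 'I_n -> L -> L -> L).
Hypothesis adj : forall i, adjoint_triple (conj i) (sw i) (nw i).
Variables (A B : Type) (R : A -> B -> L) (sigma : A -> B -> 'I_n).

Local Notation up := (up sw R sigma).
Local Notation down := (down nw R sigma).
Local Notation is_concept := (concept sw nw R sigma).
Local Notation cle := (@concept_le L A B).
Local Notation "p ≼ q" := (cle p q) (at level 70).
Local Notation is_bot := (is_bottom is_concept cle).
Local Notation is_top := (is_top is_concept cle).
Local Notation proper := (proper_elt is_concept cle).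

Implicit Types (x y : L) (f : A -> L) (g : B -> L) (p q : (B -> L) * (A -> L)).

Lemma le_up x g a : x ⊑ up g a <-> forall b, conj (sigma a b) x (g b) ⊑ R a b.
Proof.
split=> [le_x b | le_R].
  by apply/(adj_sw (adj _)); apply: cl_trans le_x _; apply: cl_inf_lb; exists b.
by apply: cl_inf_glb => z [b ->]; apply/(adj_sw (adj _)).
Qed.

Lemma le_down y f b : y ⊑ down f b <-> forall a, conj (sigma a b) (f a) y ⊑ R a b.
Proof.
split=> [le_y a | le_R].
  by apply/(adj_nw (adj _)); apply: cl_trans le_y _; apply: cl_inf_lb; exists a.
by apply: cl_inf_glb => z [a ->]; apply/(adj_nw (adj _)).
Qed.

Lemma le_down_up g b : g b ⊑ down (up g) b.
Proof. by apply/le_down => a; move/le_up: (cl_refl (up g a)). Qed.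

Lemma le_up_down f a : f a ⊑ up (down f) a.
Proof. by apply/le_up => b; move/le_down: (cl_refl (down f b)). Qed.

Lemma up_antitone g1 g2 : (forall b, g1 b ⊑ g2 b) -> forall a, up g2 a ⊑ up g1 a.
Proof.
move=> le_g a; apply/le_up => b; apply: cl_trans (conj_mono (adj _) (cl_refl _) (le_g b)) _.
by move/le_up: (cl_refl (up g2 a)).
Qed.

Lemma down_antitone f1 f2 : (forall a, f1 a ⊑ f2 a) -> forall b, down f2 b ⊑ down f1 b.
Proof.
move=> le_f b; apply/le_down => a; apply: cl_trans (conj_mono (adj _) (le_f a) (cl_refl _)) _.
by move/le_down: (cl_refl (down f2 b)).
Qed.

Lemma up_down_up g : up (down (up g)) = up g.
Proof. by apply: cl_le_funext; [apply: up_antitone; apply: le_down_up | apply: le_up_down]. Qed.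

Lemma down_up_down f : down (up (down f)) = down f.
Proof. by apply: cl_le_funext; [apply: down_antitone; apply: le_up_down | apply: le_down_up]. Qed.

Lemma up_spike b y a : up (spike b y) a = sw (sigma a b) (R a b) y.
Proof.
apply: cl_antisym; first by apply: cl_inf_lb; exists b; rewrite spike_at.
apply: cl_inf_glb => z [b' ->]; case: (classic (b' = b)) => [-> | neq_b].
  by rewrite spike_at; apply: cl_refl.
by rewrite spike_off // (sw_bot (adj _)); apply: cl_top_max.
Qed.

Lemma down_spike a x b : down (spike a x) b = nw (sigma a b) (R a b) x.
Proof.
apply: cl_antisym; first by apply: cl_inf_lb; exists a; rewrite spike_at.
apply: cl_inf_glb => z [a' ->]; case: (classic (a' = a)) => [-> | neq_a].
  by rewrite spike_at; apply: cl_refl.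
by rewrite spike_off // (nw_bot (adj _)); apply: cl_top_max.
Qed.

Definition conceptA f := (down f, up (down f)).
Definition conceptB g := (down (up g), up g).

Lemma conceptA_is_concept f : is_concept (conceptA f).
Proof. by split=> //=; apply: down_up_down. Qed.

Lemma conceptB_is_concept g : is_concept (conceptB g).
Proof. by split=> //=; apply: up_down_up. Qed.

Lemma concept_le_conceptA p f : is_concept p -> (forall a, f a ⊑ p.2 a) -> p ≼ conceptA f.
Proof. by case=> _ p1E le_f b; rewrite -p1E; apply: down_antitone. Qed.

Lemma conceptA_antitone f1 f2 : (forall a, f1 a ⊑ f2 a) -> conceptA f2 ≼ conceptA f1.
Proof. exact: down_antitone. Qed.

Lemma conceptB_monotone g1 g2 : (forall b, g1 b ⊑ g2 b) -> conceptB g1 ≼ conceptB g2.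
Proof. by move=> le_g; apply: down_antitone; apply: up_antitone. Qed.

Lemma concept_conj_le p a b : is_concept p -> conj (sigma a b) (p.2 a) (p.1 b) ⊑ R a b.
Proof. by case=> <- _; move/le_up: (cl_refl (up p.1 a)). Qed.

Lemma concept_snd_eq_bot p a b : is_concept p -> p.1 b <> ⊥ -> R a b = ⊥ ->
  ~ has_zero_divisors (conj (sigma a b)) -> p.2 a = ⊥.
Proof.
move=> p_c p_b R_ab no_zd; apply: NNPP => p_a; apply: no_zd.
exists (p.2 a), (p.1 b); split=> //; split=> //.
by apply: cl_le_bot; rewrite -R_ab; apply: concept_conj_le.
Qed.

Definition top_concept := conceptA (fun _ => ⊥).

Lemma top_concept_fst b : top_concept.1 b = ⊤.
Proof.
by apply: cl_top_le; apply/le_down => a; rewrite (conj_bot_l (adj _)); apply: cl_bot_min.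
Qed.

Lemma is_topE p : is_top p <-> is_concept p /\ forall b, p.1 b = ⊤.
Proof.
split=> [[p_c p_max] | [p_c p_top]]; split=> //.
  move=> b; apply: cl_top_le; rewrite -(top_concept_fst b).
  exact: p_max (conceptA_is_concept _) b.
by move=> q _ b; rewrite p_top; apply: cl_top_max.
Qed.

Lemma is_top_ge p q : is_concept q -> p ≼ q -> is_top p -> is_top q.
Proof.
move=> q_c le_pq /is_topE [_ p_top]; apply/is_topE; split=> // b.
by apply: cl_top_le; rewrite -(p_top b).
Qed.

Lemma is_bottom_le p q : is_concept p -> p ≼ q -> is_bot q -> is_bot p.
Proof.
by move=> p_c le_pq [_ q_min]; split=> // r r_c b; apply: cl_trans (le_pq b) (q_min r r_c b).
Qed.

Section Normalized.
Hypothesis conj_top : forall i x, conj i x ⊤ = x /\ conj i ⊤ x = x.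
Hypothesis R_normalized : normalized R.

Lemma conj_top_r i x : conj i x ⊤ = x.
Proof. exact: proj1 (conj_top i x). Qed.

Lemma conj_top_l i x : conj i ⊤ x = x.
Proof. exact: proj2 (conj_top i x). Qed.

Definition bot_concept := conceptA (fun _ => ⊤).

Lemma bot_concept_fst b : bot_concept.1 b = ⊥.
Proof.
have [_ [a R_ab]] := R_normalized.2 b.
apply: cl_le_bot; rewrite -R_ab -{1}(nw_top (adj (sigma a b)) (R a b) (conj_top_l _)).
by rewrite -down_spike; apply: down_antitone => a'; apply: cl_top_max.
Qed.

Lemma is_bottomE p : is_bot p <-> is_concept p /\ forall b, p.1 b = ⊥.
Proof.
split=> [[p_c p_min] | [p_c p_bot]]; split=> //.
  move=> b; apply: cl_le_bot; rewrite -(bot_concept_fst b).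
  exact: p_min (conceptA_is_concept _) b.
by move=> q _ b; rewrite p_bot; apply: cl_bot_min.
Qed.

Lemma concept_fst_topE p : is_concept p -> (forall b, p.1 b = ⊤) <-> (forall a, p.2 a = ⊥).
Proof.
move=> p_c; split=> [p_top a | p_bot b].
  have [_ [b R_ab]] := R_normalized.1 a.
  apply: cl_le_bot; rewrite -R_ab -[p.2 a](conj_top_r (sigma a b)) -(p_top b).
  exact: concept_conj_le.
case: p_c => _ <-; apply: cl_top_le; apply/le_down => a.
by rewrite p_bot (conj_bot_l (adj _)); apply: cl_bot_min.
Qed.

Lemma proper_snd_neq_bot p : proper p -> exists a, p.2 a <> ⊥.
Proof.
case=> p_c [_ p_ntop]; apply: NNPP => no_a; apply: p_ntop; apply/is_topE; split=> //.
by apply/concept_fst_topE => // a; apply: NNPP => p_a; apply: no_a; exists a.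
Qed.

Definition object_concept a := conceptA (spike a ⊤).
Definition attribute_concept b := conceptB (spike b ⊤).

Lemma object_concept_fst a b : (object_concept a).1 b = R a b.
Proof. exact: (etrans (down_spike _ _ _) (nw_top (adj _) _ (conj_top_l _))). Qed.

Lemma attribute_concept_snd b a : (attribute_concept b).2 a = R a b.
Proof. exact: (etrans (up_spike _ _ _) (sw_top (adj _) _ (conj_top_r _))). Qed.

Lemma attribute_concept_fst_at b : (attribute_concept b).1 b = ⊤.
Proof. by apply: cl_top_le; rewrite -{1}(spike_at b ⊤); apply: le_down_up. Qed.

Lemma object_concept_proper a : proper (object_concept a).
Proof.
have [[b1 R_ab1] [b2 R_ab2]] := R_normalized.1 a.
split; first exact: conceptA_is_concept.
split=> [/is_bottomE [_ X_bot] | /is_topE [_ X_top]].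
  by apply: R_ab1; rewrite -object_concept_fst.
by apply: (cl_bot_neq_top R_ab1); rewrite -R_ab2 -object_concept_fst.
Qed.

Lemma attribute_concept_proper b : proper (attribute_concept b).
Proof.
have [[a1 R_a1b] _] := R_normalized.2 b.
split; first exact: conceptB_is_concept.
split=> [/is_bottomE [_ Y_bot] | /is_topE [Y_c Y_top]].
  by apply: (cl_bot_neq_top R_a1b); rewrite -(Y_bot b) attribute_concept_fst_at.
by apply: R_a1b; rewrite -attribute_concept_snd; apply: (concept_fst_topE Y_c).1.
Qed.

Lemma conceptA_spike_proper a x : x <> ⊥ -> proper (conceptA (spike a x)).
Proof.
move=> x_neq0; have w_c := conceptA_is_concept (spike a x).
have [_ [X_nbot _]] := object_concept_proper a.
split=> //; split=> [w_bot | /is_topE [_ w_top]].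
  apply: X_nbot; apply: is_bottom_le w_bot; first exact: conceptA_is_concept.
  by apply: conceptA_antitone; apply: spike_le; rewrite spike_at; apply: cl_top_max.
apply: x_neq0; apply: cl_le_bot; rewrite -((concept_fst_topE w_c).1 w_top a).
by rewrite -{1}(spike_at a x); apply: le_up_down.
Qed.

Lemma conceptB_spike_proper b y : y <> ⊥ -> proper (conceptB (spike b y)).
Proof.
move=> y_neq0; have z_c := conceptB_is_concept (spike b y).
have [Y_c [_ Y_ntop]] := attribute_concept_proper b.
split=> //; split=> [/is_bottomE [_ z_bot] | z_top].
  by apply: y_neq0; apply: cl_le_bot; rewrite -(z_bot b) -{1}(spike_at b y); apply: le_down_up.
apply: Y_ntop; apply: is_top_ge z_top => //.
by apply: conceptB_monotone; apply: spike_le; rewrite spike_at; apply: cl_top_max.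
Qed.

Section FromBlocks.
Variables (J : Type) (K : J -> (B -> L) * (A -> L) -> Prop).
Hypothesis K_block : forall j, is_block is_concept cle (K j).
Hypothesis K_independent :
  forall j j', j <> j' -> independent_blocks is_concept cle (K j) (K j').
Hypothesis K_cover : forall p, is_concept p <-> exists j, K j p.

Lemma block_comparable j k p : K j k -> proper k -> proper p -> k ≼ p \/ p ≼ k -> K j p.
Proof. by have [_ [_ [_ [_ [_ K_conv]]]]] := K_block j; apply: K_conv. Qed.

Lemma proper_block_unique j j' p : proper p -> K j p -> K j' p -> j = j'.
Proof.
case=> _ [p_nbot p_ntop] Kj Kj'; apply: NNPP => neq_j.
by case: (K_independent neq_j Kj Kj').
Qed.

Lemma block_object j p a : proper p -> p.2 a <> ⊥ -> K j p <-> K j (object_concept a).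
Proof.
move=> p_pr p_a; set w := conceptA (spike a (p.2 a)).
have w_pr : proper w by apply: conceptA_spike_proper.
have le_pw : p ≼ w.
  by apply: concept_le_conceptA; [case: p_pr | apply: spike_le; apply: cl_refl].
have le_Xw : object_concept a ≼ w.
  by apply: conceptA_antitone; apply: spike_le; rewrite spike_at; apply: cl_top_max.
have X_pr := object_concept_proper a.
split=> Kj.
  have Kjw : K j w by apply: block_comparable Kj p_pr w_pr _; left.
  by apply: block_comparable Kjw w_pr X_pr _; right.
have Kjw : K j w by apply: block_comparable Kj X_pr w_pr _; left.
by apply: block_comparable Kjw w_pr p_pr _; right.
Qed.

Lemma block_object_attribute j a b :
  R a b <> ⊥ -> K j (object_concept a) <-> K j (attribute_concept b).
Proof.
move=> R_ab; set z := conceptB (spike b (R a b)).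
have z_pr : proper z by apply: conceptB_spike_proper.
have le_zX : z ≼ object_concept a.
  apply: concept_le_conceptA; first exact: conceptB_is_concept.
  apply: spike_le; rewrite /= up_spike; apply/(adj_sw (adj _)).
  by rewrite conj_top_l; apply: cl_refl.
have le_zY : z ≼ attribute_concept b.
  by apply: conceptB_monotone; apply: spike_le; rewrite spike_at; apply: cl_top_max.
have X_pr := object_concept_proper a; have Y_pr := attribute_concept_proper b.
split=> Kj.
  have Kjz : K j z by apply: block_comparable Kj X_pr z_pr _; right.
  by apply: block_comparable Kjz z_pr Y_pr _; left.
have Kjz : K j z by apply: block_comparable Kj Y_pr z_pr _; right.
by apply: block_comparable Kjz z_pr X_pr _; left.
Qed.

Lemma block_zero_divisor j k a b x y :
  K j (object_concept a) -> K k (attribute_concept b) ->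
  x <> ⊥ -> y <> ⊥ -> conj (sigma a b) x y = ⊥ -> j = k.
Proof.
move=> KjX KkY x_neq0 y_neq0 xy0; set z := conceptB (spike b y).
have z_pr : proper z by apply: conceptB_spike_proper.
have le_x : x ⊑ z.2 a.
  by rewrite /= up_spike; apply/(adj_sw (adj _)); rewrite xy0; apply: cl_bot_min.
have z_a : z.2 a <> ⊥ by move=> z_a0; apply: x_neq0; apply: cl_le_bot; rewrite -z_a0.
have Kkz : K k z.
  apply: block_comparable KkY (attribute_concept_proper b) z_pr _; right.
  by apply: conceptB_monotone; apply: spike_le; rewrite spike_at; apply: cl_top_max.
exact: proper_block_unique z_pr ((block_object j z_pr z_a).2 KjX) Kkz.
Qed.

Lemma block_has_object j : exists a, K j (object_concept a).
Proof.
have [_ [_ [_ [_ [[p [Kp p_pr]] _]]]]] := K_block j.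
have [a p_a] := proper_snd_neq_bot p_pr.
by exists a; apply/(block_object j p_pr p_a).
Qed.

Lemma block_misses_object j : exists a, ~ K j (object_concept a).
Proof.
have [_ [[p [p_c Kj_p]] _]] := K_block j.
have [j' Kj'p] := (K_cover p).1 p_c.
have [a Kj'X] := block_has_object j'.
exists a => KjX; apply: Kj_p.
by rewrite (proper_block_unique (object_concept_proper a) KjX Kj'X).
Qed.

Lemma block_separable j :
  separable R (fun a => K j (object_concept a)) (fun b => K j (attribute_concept b)).
Proof.
have [a KjX] := block_has_object j; have [a' not_KjX'] := block_misses_object j.
have [[b R_ab] _] := R_normalized.1 a; have [[b' R_ab'] _] := R_normalized.1 a'.
have KjY : K j (attribute_concept b) by apply/(block_object_attribute j R_ab).
have not_KjY' : ~ K j (attribute_concept b') by rewrite -(block_object_attribute j R_ab').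
split; first by exists a. split; first by exists a'.
split; first by exists b. split; first by exists b'.
split; first by exists a, b.
split=> a1 b1 KX KY; apply: NNPP => R_ab1.
  by apply: KY; apply/(block_object_attribute j R_ab1).
by apply: KX; apply/(block_object_attribute j R_ab1).
Qed.

Lemma subcontexts_of_blocks : has_independent_subcontext_decomposition conj R sigma.
Proof.
have cover_X a : exists j, K j (object_concept a).
  by apply/K_cover; case: (object_concept_proper a).
have cover_Y b : exists j, K j (attribute_concept b).
  by apply/K_cover; case: (attribute_concept_proper b).
exists J, (fun j a => K j (object_concept a)), (fun j b => K j (attribute_concept b)).
split; first by have [j _] := (K_cover _).1 (conceptA_is_concept (fun _ => ⊥)); exists.
split; first exact: block_separable.
split.
  by move=> l m a neq_lm Kl Km; apply/neq_lm/(proper_block_unique (object_concept_proper a)).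
split=> //; split.
  by move=> l m b neq_lm Kl Km; apply/neq_lm/(proper_block_unique (attribute_concept_proper b)).
split=> // l a b sep [x [y [x_neq0 [y_neq0 xy0]]]].
have [j KjX] := cover_X a; have [k KkY] := cover_Y b.
have j_k := block_zero_divisor KjX KkY x_neq0 y_neq0 xy0.
case: sep => [[KlX KlY] | [KlX KlY]].
  by apply: KlX; rewrite (proper_block_unique (attribute_concept_proper b) KlY KkY) -j_k.
by apply: KlY; rewrite (proper_block_unique (object_concept_proper a) KlX KjX) j_k.
Qed.

End FromBlocks.

Lemma is_bottom_of_split (Y : B -> Prop) p : is_concept p ->
  (forall b, ~ Y b -> p.1 b = ⊥) -> (forall b, Y b -> p.1 b = ⊥) -> is_bot p.
Proof.
move=> p_c p_off p_in; apply/is_bottomE; split=> // b.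
by case: (classic (Y b)); [apply: p_in | apply: p_off].
Qed.

Section FromSubcontexts.
Variables (Lam : Type) (AA : Lam -> A -> Prop) (BB : Lam -> B -> Prop).
Hypothesis Lam_inhabited : inhabited Lam.
Hypothesis AA_BB_separable : forall l, separable R (AA l) (BB l).
Hypothesis AA_cover : forall a, exists l, AA l a.
Hypothesis BB_disjoint : forall l m b, l <> m -> BB l b -> BB m b -> False.
Hypothesis BB_cover : forall b, exists l, BB l b.
Hypothesis no_zero_divisors : forall l a b,
  (~ AA l a /\ BB l b) \/ (AA l a /\ ~ BB l b) -> ~ has_zero_divisors (conj (sigma a b)).

Definition subcontext_block l p :=
  is_concept p /\ (is_top p \/ forall b, ~ BB l b -> p.1 b = ⊥).

Lemma concept_fst_in_one_block p l : is_concept p -> ~ is_top p ->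
  (forall b, ~ BB l b -> p.1 b = ⊥) \/ (forall b, BB l b -> p.1 b = ⊥).
Proof.
move=> p_c p_ntop.
case: (classic (exists b0, BB l b0 /\ p.1 b0 <> ⊥)) => [[b0 [b0_in p_b0]] | p_in]; last first.
  by right=> b b_in; apply: NNPP => p_b; apply: p_in; exists b.
left=> b b_out; apply: NNPP => p_b; apply: p_ntop; apply/is_topE; split=> //.
apply/(concept_fst_topE p_c) => a; have [m a_m] := AA_cover a.
have [b' [b'_out p_b']] : exists b', ~ BB m b' /\ p.1 b' <> ⊥.
  case: (classic (m = l)) => [-> | neq_ml]; first by exists b.
  by exists b0; split=> // b0_m; apply: BB_disjoint neq_ml b0_m b0_in.
have [_ [_ [_ [_ [_ [R_off _]]]]]] := AA_BB_separable m.
apply: concept_snd_eq_bot p_c p_b' (R_off a b' a_m b'_out) _.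
exact: no_zero_divisors (or_intror (Logic.conj a_m b'_out)).
Qed.

Lemma subcontext_block_meet l p q m : subcontext_block l p -> subcontext_block l q ->
  is_meet is_concept cle p q m -> subcontext_block l m.
Proof.
case=> _ p_in [_ q_in] [m_c [le_mp [le_mq m_glb]]]; split=> //.
case: p_in => [p_top | p_off].
  case: q_in => [q_top | q_off].
    by left; split=> // r r_c; apply: m_glb r_c (proj2 p_top r r_c) (proj2 q_top r r_c).
  by right=> b b_out; apply: cl_le_bot; rewrite -(q_off b b_out); apply: le_mq.
by right=> b b_out; apply: cl_le_bot; rewrite -(p_off b b_out); apply: le_mp.
Qed.

Lemma subcontext_block_join l p q m : subcontext_block l p -> subcontext_block l q ->
  is_join is_concept cle p q m -> subcontext_block l m.
Proof.
case=> p_c p_in [q_c q_in] [m_c [le_pm [le_qm m_lub]]]; split=> //.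
case: (classic (is_top m)) => [m_top | m_ntop]; [by left | right].
case: (concept_fst_in_one_block l m_c m_ntop) => [// | m_in].
have below_bot r : is_concept r -> r ≼ m ->
    (is_top r \/ forall b, ~ BB l b -> r.1 b = ⊥) -> is_bot r.
  move=> r_c le_rm [r_top | r_off]; first by case: m_ntop; apply: is_top_ge le_rm r_top.
  apply: is_bottom_of_split r_c r_off _ => b b_in.
  by apply: cl_le_bot; rewrite -(m_in b b_in); apply: le_rm.
have p_bot := below_bot p p_c le_pm p_in; have [_ q_min] := below_bot q q_c le_qm q_in.
have /is_bottomE [_ m_bot] : is_bot m.
  apply: is_bottom_le p_bot => //.
  by apply: m_lub p_c _ (q_min p p_c) => b; apply: cl_refl.
by move=> b _; apply: m_bot.
Qed.

Lemma subcontext_block_comparable l k p : subcontext_block l k -> proper k -> proper p ->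
  k ≼ p \/ p ≼ k -> subcontext_block l p.
Proof.
case=> _ k_in [k_c [k_nbot k_ntop]] [p_c [_ p_ntop]] cmp; split=> //; right.
case: k_in => [// | k_off].
case: cmp => [le_kp | le_pk]; last first.
  by move=> b b_out; apply: cl_le_bot; rewrite -(k_off b b_out); apply: le_pk.
case: (concept_fst_in_one_block l p_c p_ntop) => [// | p_in].
case: k_nbot; apply: is_bottom_of_split k_c k_off _ => b b_in.
by apply: cl_le_bot; rewrite -(p_in b b_in); apply: le_kp.
Qed.

Lemma subcontext_block_is_block l : is_block is_concept cle (subcontext_block l).
Proof.
have [[a a_in] [_ [_ [[b b_out] [_ [R_off _]]]]]] := AA_BB_separable l.
split; first by move=> p [].
split.
  have [Y_c [_ Y_ntop]] := attribute_concept_proper b.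
  exists (attribute_concept b); split=> // [[_ [// | Y_off]]].
  have [[a1 R_a1b] _] := R_normalized.2 b.
  by apply: (cl_bot_neq_top R_a1b); rewrite -(Y_off b b_out) attribute_concept_fst_at.
split; first exact: subcontext_block_meet.
split; first exact: subcontext_block_join.
split; last exact: subcontext_block_comparable.
exists (object_concept a); split; last exact: object_concept_proper.
split; first exact: conceptA_is_concept.
by right=> b' b'_out; rewrite object_concept_fst; apply: R_off.
Qed.

Lemma subcontext_blocks_independent l m : l <> m ->
  independent_blocks is_concept cle (subcontext_block l) (subcontext_block m).
Proof.
move=> neq_lm p [p_c [p_top | p_off_l]] [_ [p_top' | p_off_m]]; try by right.
left; apply: is_bottom_of_split p_c p_off_l _ => b b_l; apply: p_off_m => b_m.
exact: BB_disjoint neq_lm b_l b_m.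
Qed.

Lemma subcontext_blocks_cover p : is_concept p <-> exists l, subcontext_block l p.
Proof.
split=> [p_c | [l [p_c _]] //]; have [l0] := Lam_inhabited.
case: (classic (is_top p)) => [p_top | p_ntop]; first by exists l0; split; [|left].
case: (classic (exists b0, p.1 b0 <> ⊥)) => [[b0 p_b0] | p_zero]; last first.
  by exists l0; split=> //; right=> b _; apply: NNPP => p_b; apply: p_zero; exists b.
have [l b0_in] := BB_cover b0.
exists l; split=> //; right.
by case: (concept_fst_in_one_block l p_c p_ntop) => [// | p_in]; case: p_b0; apply: p_in.
Qed.

Lemma blocks_of_subcontexts : has_independent_block_decomposition is_concept cle.
Proof.
exists Lam, subcontext_block; split; first exact: subcontext_block_is_block.
by split; [apply: subcontext_blocks_independent | apply: subcontext_blocks_cover].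
Qed.

End FromSubcontexts.
End Normalized.
End ConceptLattice.

Theorem corollary37
  (L : CLattice) (n : nat) (conj sw nw : 'I_n -> L -> L -> L)
  (Hadj : forall i, adjoint_triple (conj i) (sw i) (nw i))
  (Hunit : forall i (x : L), conj i x (cl_top L) = x /\ conj i (cl_top L) x = x)
  (A B : Type) (HA : inhabited A) (HB : inhabited B)
  (R : A -> B -> L) (sigma : A -> B -> 'I_n)
  (Hnorm : normalized R)
  (Hacc : ACC (concept sw nw R sigma) (@concept_le L A B)) :
  has_independent_subcontext_decomposition conj R sigma <->
  has_independent_block_decomposition (concept sw nw R sigma) (@concept_le L A B).
Proof.
(* [HA], [HB] and [Hacc] are unused: the explicit X(a), Y(b) replace the chain condition. *)
split.
  case=> Lam [AA [BB [Lam_inh [sep [_ [AA_cover [BB_disj [BB_cover no_zd]]]]]]]].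
  exact: (blocks_of_subcontexts Hadj Hunit Hnorm Lam_inh sep AA_cover BB_disj BB_cover no_zd).
case=> J [K [K_block [K_indep K_cover]]].
exact: (subcontexts_of_blocks Hadj Hunit Hnorm K_block K_indep K_cover).
Qed.
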